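(* Let $G$ be a tree on $k\ge 2$ vertices, $n\ge 1$, and let $e$ be an edge of $G$. Then $\Gamma^G_n$ has exactly one $e$-cycle of length $2^n$, and for each $0\le i<n$ the number of $e$-cycles of length $2^i$ in $\Gamma^G_n$ is $(k-2)k^{n-i-1}$. (Every $e$-cycle has length $2^i$ for some $0\le i\le n$.)
   Context: Let $G=(V,E)$ be a finite tree with vertex set $V$ of size $k$, and fix an orientation of each edge, so that each edge becomes an ordered pair $e=(s,t)$. Each oriented edge $e=(s,t)$ acts on the set $V^*$ of finite words over the alphabet $V$ by the recursive rule: $e(\emptyset)=\emptyset$, $e(sw)=t\,e(w)$, $e(tw)=sw$, and $e(xw)=xw$ for $x\in V\setminus\{s,t\}$ (words are read left to right, $w\in V^*$). This action preserves word length. For $n\ge 1$, the Schreier graph $\Gamma_n^G$ is the multigraph with vertex set $V^n$ having, for each $u\in V^n$ and each oriented edge $e$ of $G$, one edge joining $u$ and $e(u)$, labelled $e$ (a loop if $e(u)=u$). For an edge $e$ of $G$, the $e$-cycles of $\Gamma_n^G$ are the subgraphs formed by an orbit of $e$ on $V^n$ together with the edges labelled $e$ between its vertices; an orbit of size $m$ gives an $e$-cycle of length $m$ (a loop if $m=1$, a pair of parallel edges if $m=2$). *)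

From mathcomp Require Import all_boot.
Set Implicit Arguments. Unset Strict Implicit. Unset Printing Implicit Defensive.

Section TreeDefs.
Variable V : finType.

Definition uadj (E : {set V * V}) : rel V :=
  fun x y => ((x, y) \in E) || ((y, x) \in E).

Definition is_orientation (E : {set V * V}) : Prop :=
  (forall x, (x, x) \notin E) /\
  (forall x y, (x, y) \in E -> (y, x) \notin E).

Definition graph_connected (E : {set V * V}) : Prop :=
  forall x y, connect (uadj E) x y.

Definition graph_acyclic (E : {set V * V}) : Prop :=
  forall c : seq V, uniq c -> 3 <= size c -> ~~ cycle (uadj E) c.

Definition is_oriented_tree (E : {set V * V}) : Prop :=
  [/\ is_orientation E, graph_connected E & graph_acyclic E].

Fixpoint edge_act (s t : V) (w : seq V) : seq V :=
  match w with
  | [::] => [::]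
  | x :: w' =>
      if x == s then t :: edge_act s t w'
      else if x == t then s :: w'
      else x :: w'
  end.

Lemma size_edge_act s t w : size (edge_act s t w) = size w.
Proof.
elim: w => [|x w IH] //=.
by case: ifP => _ /=; [rewrite IH | case: ifP].
Qed.

Lemma size_edge_act_tuple n s t (w : n.-tuple V) : size (edge_act s t w) == n.
Proof. by rewrite size_edge_act size_tuple. Qed.

Definition edge_actT n s t (w : n.-tuple V) : n.-tuple V :=
  Tuple (size_edge_act_tuple s t w).

Definition e_orbit n s t (u : n.-tuple V) : {set n.-tuple V} :=
  [set v | fconnect (@edge_actT n s t) u v].

(* the set of all e-orbits on V^n; an orbit of size m is an e-cycle of length m *)
Definition e_orbits n s t : {set {set n.-tuple V}} :=
  [set e_orbit s t u | u : n.-tuple V].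

End TreeDefs.

From mathcomp Require Import all_boot zify.
Set Implicit Arguments. Unset Strict Implicit. Unset Printing Implicit Defensive.

(* Read s as the binary digit 1 and t as 0.  The edge (s,t) acts on a word as
   "add one, little-endian, discarding the overflow" on its maximal prefix
   spelled in {s,t}, and fixes the rest of the word.  Hence the orbit of u
   consists of the words with the same {s,t}-prefix length p and the same
   remaining suffix, and it has exactly 2^p elements.  Counting words of
   length n by p (2^i prefixes, k - 2 letters ending them, k^(n-i-1) tails for
   i < n, and 2^n words when p = n) and dividing by the orbit size gives the
   number of orbits of each size. *)

Lemma sum_tupleS (T : finType) n (F : seq T -> nat) :
  \sum_(u : n.+1.-tuple T) F u = \sum_(x : T) \sum_(w : n.-tuple T) F (x :: w).
Proof.
rewrite pair_bigA (reindex (fun p : T * n.-tuple T => [tuple of p.1 :: p.2])) //=.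
exists (fun u : n.+1.-tuple T => (thead u, [tuple of behead u])) => [[x w] _|u _] /=.
  by congr (_, _); apply: val_inj.
by rewrite [RHS]tuple_eta.
Qed.

Lemma sum_nat_of_bool (T : finType) (P : pred T) : \sum_(x : T) (P x : nat) = #|P|.
Proof. by rewrite -sum1_card [RHS]big_mkcond. Qed.

Section ClassesOfSize.
Variables (T : finType) (cls : T -> {set T}).
Hypothesis cls_refl : forall x, x \in cls x.
Hypothesis cls_eq : forall x y, y \in cls x -> cls y = cls x.

Lemma card_classes_of_size m :
  #|[set C in [set cls x | x : T] | #|C| == m]| * m = #|[set x | #|cls x| == m]|.
Proof.
rewrite -sum_nat_const -sum1dep_card.
rewrite (partition_big cls (mem [set C in [set cls x | x : T] | #|C| == m])) => [|x].
  apply: eq_bigr => _ /setIdP[/imsetP[x0 _ ->] /eqP <-].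
  rewrite sum1dep_card; apply: eq_card => x; rewrite inE.
  apply/idP/andP => [x_in | [_ /eqP <-] //].
  by rewrite (cls_eq x_in) !eqxx.
by rewrite !inE imset_f.
Qed.

End ClassesOfSize.

Section EdgeOdometer.
Variables (V : finType) (s t : V).
Hypothesis s_neq_t : s != t.

Definition on_edge (x : V) : bool := (x == s) || (x == t).

Definition edge_prefix (w : seq V) : nat := find (predC on_edge) w.

Fixpoint edge_val (w : seq V) : nat :=
  if w is x :: w' then (x == s) + 2 * edge_val w' else 0.

Local Notation e := (edge_act s t).

Lemma t_neq_s : (t == s) = false.
Proof. by apply/negbTE; rewrite eq_sym. Qed.

Lemma all_on_edge_take_prefix w : all on_edge (take (edge_prefix w) w).
Proof. by elim: w => //= x w IH; case: ifP => //= /negbFE ->. Qed.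

Lemma size_take_edge_prefix w : size (take (edge_prefix w) w) = edge_prefix w.
Proof. by rewrite size_takel // find_size. Qed.

Lemma edge_act_prefix w :
  e w = e (take (edge_prefix w) w) ++ drop (edge_prefix w) w.
Proof.
elim: w => //= x w IH; rewrite /on_edge.
have [->|_] := eqVneq x s; first by rewrite /= eqxx IH.
have [->|_] //= := eqVneq x t.
by rewrite t_neq_s eqxx /= cat_take_drop.
Qed.

Lemma edge_prefix_edge_act w : edge_prefix (e w) = edge_prefix w.
Proof.
elim: w => //= x w IH; rewrite /on_edge.
have [->|x_neq_s] := eqVneq x s; first by rewrite /= /on_edge eqxx orbT IH.
have [_|x_neq_t] := eqVneq x t; first by rewrite /= /on_edge eqxx.
by rewrite /= /on_edge (negbTE x_neq_s) (negbTE x_neq_t).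
Qed.

Lemma edge_val_lt p : edge_val p < 2 ^ size p.
Proof. by elim: p => //= x p IH; rewrite expnS; case: (x == s) => /=; lia. Qed.

Lemma edge_val_inj p q : all on_edge p -> all on_edge q ->
  size p = size q -> edge_val p = edge_val q -> p = q.
Proof.
elim: p q => [|x p IH] [|y q] //= /andP[px pp] /andP[qy qq] [size_pq] val_pq.
have xs_ys : (x == s) = (y == s) by case: (x == s) (y == s) val_pq => [] []; lia.
have -> : x = y.
  move: px qy xs_ys; rewrite /on_edge.
  by have [->|_] := eqVneq x s; have [->|_] := eqVneq y s => //= /eqP -> /eqP ->.
by congr (_ :: _); apply: IH => //; case: (x == s) (y == s) val_pq xs_ys => [] [] //; lia.
Qed.

Lemma edge_val_edge_act p :
  all on_edge p -> edge_val (e p) = (edge_val p + 1) %% 2 ^ size p.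
Proof.
elim: p => //= x p IH /andP[px pp].
have [_|x_neq_s] := eqVneq x s.
  by rewrite /= t_neq_s IH // add0n expnS muln_modr; congr (_ %% _); lia.
move: px; rewrite /on_edge (negbTE x_neq_s) /= => /eqP ->; rewrite eqxx /= eqxx.
by rewrite modn_small; [lia | rewrite expnS; have := edge_val_lt p; lia].
Qed.

Definition prefix_val (w : seq V) : nat := edge_val (take (edge_prefix w) w).

Lemma prefix_val_lt w : prefix_val w < 2 ^ edge_prefix w.
Proof. by rewrite /prefix_val -{2}(size_take_edge_prefix w) edge_val_lt. Qed.

Lemma drop_edge_act w : drop (edge_prefix w) (e w) = drop (edge_prefix w) w.
Proof.
by rewrite {1}edge_act_prefix drop_size_cat // size_edge_act size_take_edge_prefix.
Qed.

Lemma prefix_val_edge_act w :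
  prefix_val (e w) = (prefix_val w + 1) %% 2 ^ edge_prefix w.
Proof.
rewrite /prefix_val edge_prefix_edge_act {1}edge_act_prefix take_size_cat;
  last by rewrite size_edge_act size_take_edge_prefix.
by rewrite edge_val_edge_act ?all_on_edge_take_prefix ?size_take_edge_prefix.
Qed.

Lemma edge_prefix_iter j w : edge_prefix (iter j e w) = edge_prefix w.
Proof. by elim: j => //= j IH; rewrite edge_prefix_edge_act. Qed.

Lemma drop_edge_prefix_iter j w :
  drop (edge_prefix w) (iter j e w) = drop (edge_prefix w) w.
Proof.
by elim: j => //= j IH; rewrite -{1}(edge_prefix_iter j w) drop_edge_act edge_prefix_iter.
Qed.

Lemma prefix_val_iter j w :
  prefix_val (iter j e w) = (prefix_val w + j) %% 2 ^ edge_prefix w.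
Proof.
elim: j => [|j IH] /=; first by rewrite addn0 modn_small // prefix_val_lt.
by rewrite prefix_val_edge_act IH edge_prefix_iter modnDml -addnA addn1.
Qed.

Lemma edge_word_eq v w : edge_prefix v = edge_prefix w ->
  drop (edge_prefix v) v = drop (edge_prefix w) w -> prefix_val v = prefix_val w -> v = w.
Proof.
move=> pre_vw drop_vw val_vw.
rewrite -(cat_take_drop (edge_prefix v) v) -(cat_take_drop (edge_prefix w) w) drop_vw.
congr (_ ++ _); apply: edge_val_inj => //;
  by rewrite ?all_on_edge_take_prefix ?size_take_edge_prefix.
Qed.

Lemma iter_edge_act_mod j w :
  iter j e w = iter (j %% 2 ^ edge_prefix w) e w.
Proof.
apply: edge_word_eq; rewrite ?edge_prefix_iter ?drop_edge_prefix_iter //.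
by rewrite !prefix_val_iter modnDmr.
Qed.

Lemma iter_edge_act_inj w i j : i < 2 ^ edge_prefix w -> j < 2 ^ edge_prefix w ->
  iter i e w = iter j e w -> i = j.
Proof.
move=> lt_i lt_j /(congr1 prefix_val); rewrite !prefix_val_iter => /eqP.
by rewrite eqn_modDl !modn_small // => /eqP.
Qed.

Lemma edge_act_reaches v w :
  edge_prefix v = edge_prefix w -> drop (edge_prefix v) v = drop (edge_prefix w) w ->
  v = iter (prefix_val v + (2 ^ edge_prefix w - prefix_val w)) e w.
Proof.
move=> pre_vw drop_vw; apply: edge_word_eq;
  rewrite ?edge_prefix_iter ?drop_edge_prefix_iter // prefix_val_iter.
have := prefix_val_lt v; have := prefix_val_lt w; rewrite pre_vw => lt_w lt_v.
by rewrite addnCA subnKC ?(ltnW lt_w) // modnDr modn_small.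
Qed.

Definition edge_key (w : seq V) := (edge_prefix w, drop (edge_prefix w) w).

Section Tuples.
Variable n : nat.
Local Notation f := (@edge_actT V n s t).

Lemma val_iter_edge_actT j (u : n.-tuple V) : val (iter j f u) = iter j e u.
Proof. by elim: j => //= j ->. Qed.

Lemma e_orbitE (u : n.-tuple V) :
  e_orbit s t u = [set v : n.-tuple V | edge_key v == edge_key u].
Proof.
apply/setP => v; rewrite !inE xpair_eqE; apply/idP/andP.
  move/iter_findex <-.
  by rewrite val_iter_edge_actT edge_prefix_iter drop_edge_prefix_iter.
move=> [/eqP pre_vu]; rewrite pre_vu => /eqP drop_vu.
suff -> : v = iter (prefix_val v + (2 ^ edge_prefix u - prefix_val u)) f u.
  exact: fconnect_iter.
by apply: val_inj; rewrite val_iter_edge_actT; apply: edge_act_reaches; rewrite ?pre_vu.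
Qed.

Lemma card_e_orbit (u : n.-tuple V) : #|e_orbit s t u| = 2 ^ edge_prefix u.
Proof.
have -> : e_orbit s t u = [set iter j f u | j : 'I_(2 ^ edge_prefix u)].
  apply/setP => v; rewrite inE.
  apply/idP/imsetP => [|[j _ ->]]; last exact: fconnect_iter.
  move=> /iter_findex v_eq.
  exists (Ordinal (ltn_pmod (findex f u v) (expn_gt0 2 (edge_prefix u)))) => //.
  by apply: val_inj; rewrite -{1}v_eq !val_iter_edge_actT -iter_edge_act_mod.
rewrite card_imset ?card_ord // => i j /(congr1 val); rewrite !val_iter_edge_actT.
by move/iter_edge_act_inj => /(_ (ltn_ord i) (ltn_ord j)) /val_inj.
Qed.

Lemma e_orbit_refl (u : n.-tuple V) : u \in e_orbit s t u.
Proof. by rewrite inE connect0. Qed.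

Lemma e_orbit_eq (u v : n.-tuple V) :
  v \in e_orbit s t u -> e_orbit s t v = e_orbit s t u.
Proof.
rewrite [in X in X -> _]e_orbitE inE => /eqP key_vu.
by apply/setP => w; rewrite !e_orbitE !inE key_vu.
Qed.

End Tuples.

Lemma card_on_edge : #|on_edge| = 2.
Proof.
rewrite (eq_card (_ : on_edge =i [set s; t])) ?cards2 ?s_neq_t // => x.
by rewrite !inE.
Qed.

Lemma sum_on_edge : \sum_(x : V) (on_edge x : nat) = 2.
Proof. by rewrite sum_nat_of_bool card_on_edge. Qed.

Lemma sum_off_edge : \sum_(x : V) (~~ on_edge x : nat) = #|V| - 2.
Proof.
by rewrite (sum_nat_of_bool (predC on_edge)) -(cardC on_edge) card_on_edge addKn.
Qed.

Lemma sum_edge_prefix0 n :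
  \sum_(u : n.+1.-tuple V) (edge_prefix u == 0 : nat) = (#|V| - 2) * #|V| ^ n.
Proof.
rewrite (sum_tupleS _ (fun w => (edge_prefix w == 0 : nat))).
rewrite -sum_off_edge -[#|V| ^ n](card_tuple n V) -sum1_card big_distrl.
apply: eq_bigr => x _; rewrite big_distrr; apply: eq_bigr => w _ /=.
by case: (on_edge x); rewrite ?muln1.
Qed.

Lemma sum_edge_prefixS n i :
  \sum_(u : n.+1.-tuple V) (edge_prefix u == i.+1 : nat)
    = 2 * \sum_(u : n.-tuple V) (edge_prefix u == i : nat).
Proof.
rewrite (sum_tupleS _ (fun w => (edge_prefix w == i.+1 : nat))).
rewrite -sum_on_edge big_distrl; apply: eq_bigr => x _; rewrite big_distrr.
apply: eq_bigr => w _ /=.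
by case: (on_edge x); rewrite ?mul1n ?mul0n.
Qed.

Lemma card_edge_prefix n i : #|[set u : n.-tuple V | edge_prefix u == i]| =
  if i < n then 2 ^ i * ((#|V| - 2) * #|V| ^ (n - i - 1)) else (i == n) * 2 ^ n.
Proof.
rewrite cardsE -sum_nat_of_bool; elim: n i => [|n IH] [|i].
- by rewrite (eq_bigr (fun=> 1)) ?sum1_card ?card_tuple // => -[[]].
- by rewrite big1 // => -[[]].
- by rewrite sum_edge_prefix0 mul1n subn1.
rewrite sum_edge_prefixS IH ltnS eqSS subSS.
by case: ifP => _; rewrite expnS; [exact: mulnA | exact: mulnCA].
Qed.

End EdgeOdometer.

Unset Implicit Arguments.

Theorem proposition3p3 (V : finType) (E : {set V * V}) (n : nat) (s t : V) :
  is_oriented_tree E -> 2 <= #|V| -> 1 <= n -> (s, t) \in E ->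
  [/\ #|[set C in e_orbits n s t | #|C| == 2 ^ n]| = 1,
      (forall i, i < n ->
         #|[set C in e_orbits n s t | #|C| == 2 ^ i]| = (#|V| - 2) * #|V| ^ (n - i - 1))
    & (forall C, C \in e_orbits n s t -> exists2 i, i <= n & #|C| = 2 ^ i)].
Proof.
move=> [[no_loop _] _ _] _ _ st_in_E.
have s_neq_t : s != t by apply: contraTneq st_in_E => ->; apply: no_loop.
have orbits_of_size i : #|[set C in e_orbits n s t | #|C| == 2 ^ i]| * 2 ^ i
    = #|[set u : n.-tuple V | edge_prefix s t u == i]|.
  rewrite card_classes_of_size => [|u|u v]; [|exact: e_orbit_refl|exact: e_orbit_eq].
  by apply: eq_card => u; rewrite !inE card_e_orbit // eqn_exp2l.
split.
- apply/eqP; rewrite -(eqn_pmul2r (expn_gt0 2 n)) mul1n orbits_of_size.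
  by rewrite card_edge_prefix // ltnn eqxx mul1n.
- move=> i lt_in; apply/eqP; rewrite -(eqn_pmul2r (expn_gt0 2 i)) orbits_of_size.
  by rewrite card_edge_prefix // lt_in mulnC.
- move=> _ /imsetP[u _ ->]; exists (edge_prefix s t u); last exact: card_e_orbit.
  by rewrite -[n in _ <= n](size_tuple u) find_size.
Qed.
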